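(* Let $G$ be a graph and $v$ a vertex of $G$. Then $v$ is always-activated if and only if $nd(v)=0$, and $v$ is never-activated if and only if $nd(v)=1$.
   Context: For a finite simple graph $G$ with vertex set $\{v_1,\dots,v_n\}$, the closed adjacency matrix $N(G)$ is the $n\times n$ matrix over $\mathbb{Z}_2$ whose $(i,j)$ entry is $1$ iff $i=j$ or $v_i$ is adjacent to $v_j$. The nullity is $\nu(G):=\dim\operatorname{Ker}(N(G))$, with the convention $\nu(K_0)=0$ for the graph with no vertices; elements of the kernel are null patterns. The null difference of $v$ is $nd(v):=\nu(G-v)-\nu(G)$, where $G-v$ is $G$ with $v$ and its incident edges deleted. A vertex $v$ is half-activated if $\boldsymbol{\ell}(v)=1$ for some null pattern $\boldsymbol{\ell}$; otherwise it is always-activated if $\mathbf{p}(v)=1$ for every $\mathbf{p}\in\mathbb{Z}_2^{V(G)}$ with $N(G)\mathbf{p}=\mathbf{1}$ (the all-ones vector), and never-activated if $\mathbf{p}(v)=0$ for every such $\mathbf{p}$. *)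

From HB Require Import structures.
From mathcomp Require Import all_boot all_order all_algebra.
Set Implicit Arguments. Unset Strict Implicit. Unset Printing Implicit Defensive.
Import GRing.Theory.
Local Open Scope ring_scope.

Definition simple_graph (n : nat) (e : rel 'I_n) : Prop :=
  irreflexive e /\ symmetric e.

Definition closed_adj (n : nat) (e : rel 'I_n) : 'M['F_2]_n :=
  \matrix_(i, j) (if (i == j) || e i j then 1 else 0).

(* Nullity: dimension of Ker N(G) = {p | N p = 0}.  kermx A is the row kernel
   {u | u *m A = 0}, so the (column) kernel of N is the row kernel of N^T. *)
Definition nullity (n : nat) (e : rel 'I_n) : nat :=
  \rank (kermx (closed_adj e)^T).

Definition del_vertex (n : nat) (e : rel 'I_n.+1) (v : 'I_n.+1) : rel 'I_n :=
  fun i j => e (lift v i) (lift v j).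

Definition null_diff (n : nat) (e : rel 'I_n.+1) (v : 'I_n.+1) : int :=
  (nullity (del_vertex e v))%:Z - (nullity e)%:Z.

Definition null_pattern (n : nat) (e : rel 'I_n) (l : 'cV['F_2]_n) : Prop :=
  closed_adj e *m l = 0.

Definition half_activated (n : nat) (e : rel 'I_n) (v : 'I_n) : Prop :=
  exists l : 'cV['F_2]_n, null_pattern e l /\ l v 0 = 1.

Definition always_activated (n : nat) (e : rel 'I_n) (v : 'I_n) : Prop :=
  ~ half_activated e v /\
  forall p : 'cV['F_2]_n, closed_adj e *m p = const_mx 1 -> p v 0 = 1.

Definition never_activated (n : nat) (e : rel 'I_n) (v : 'I_n) : Prop :=
  ~ half_activated e v /\
  forall p : 'cV['F_2]_n, closed_adj e *m p = const_mx 1 -> p v 0 = 0.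

From HB Require Import structures.
From mathcomp Require Import all_boot all_order all_algebra zify.
Set Implicit Arguments. Unset Strict Implicit. Unset Printing Implicit Defensive.
Import GRing.Theory.
Local Open Scope ring_scope.

(* Let N be the closed adjacency matrix of G and e_v the v-th unit vector.  Over
   Z_2 a symmetric matrix with unit diagonal satisfies x N x^T = x 1, because the
   off-diagonal terms pair up; hence 1 is orthogonal to Ker N and N p = 1 is
   solvable.  As N is symmetric, v is half-activated iff e_v is not in the row
   space of N.  Otherwise e_v = w N, and every solution of N p = 1 has
   p(v) = w N p = w 1 = w N w^T = w(v).  Deleting coordinate v identifies the
   null patterns of N vanishing at v with the null patterns of the matrix N' of
   G - v that are orthogonal to column v of N; counting dimensions gives
   nd(v) = [some w with w N = e_v has w(v) = 0] - [v is half-activated],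
   which is 1 - w(v) if v is not half-activated and -1 if it is. *)

Lemma kermx_mul_neq0P (F : fieldType) m k p (M : 'M[F]_(m, k)) (d : 'M_(m, p)) :
  reflect (exists2 u : 'rV_m, u *m M = 0 & u *m d != 0) (kermx M *m d != 0).
Proof.
apply: (iffP idP) => [Kd | [u /sub_kermxP/submxP[w ->] ud]].
  have [i] : exists i, row i (kermx M) *m d != 0.
    apply/existsP; apply: contraNT Kd; rewrite negb_exists => /forallP Kd.
    by apply/eqP/row_matrixP => i; rewrite row_mul row0; apply/eqP/negbNE.
  by exists (row i (kermx M)); first by apply/sub_kermxP/row_sub.
by apply: contraNneq ud; rewrite -mulmxA => ->; rewrite mulmx0.
Qed.

Lemma mxrank_cV (F : fieldType) m (M : 'cV[F]_m) : \rank M = (M != 0) :> nat.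
Proof. by have := rank_leq_col M; rewrite -mxrank_eq0; case: (\rank M) => [|[|]]. Qed.

Lemma mx11_neq0 (F : fieldType) (M : 'M[F]_1) : (M != 0) = (M 0 0 != 0).
Proof.
apply/idP/idP; apply: contraNneq; last by move->; rewrite mxE.
by move=> M00; rewrite [M]mx11_scalar M00 raddf0.
Qed.

Lemma rV_mul_delta_mx (F : fieldType) m (w : 'rV[F]_m) k :
  (w *m (delta_mx k 0 : 'cV_m)) 0 0 = w 0 k.
Proof. by rewrite -colE mxE. Qed.

Section SymmetricKernel.
Variables (F : fieldType) (n : nat) (N : 'M[F]_n).
Hypothesis N_sym : N^T = N.

Lemma sym_submxE m (Y : 'M_(m, n)) : (Y <= N)%MS = (kermx N *m Y^T == 0).
Proof.
have NS : (N <= kermx (kermx N)^T)%MS.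
  by apply/sub_kermxP; rewrite -{1}N_sym -trmx_mul mulmx_ker trmx0.
have rankS : \rank (kermx (kermx N)^T) = \rank N.
  by rewrite mxrank_ker mxrank_tr mxrank_ker subKn // rank_leq_row.
have -> : (N :=: kermx (kermx N)^T)%MS.
  by apply/eqmxP; rewrite -(mxrank_leqif_eq NS).2 rankS.
apply/sub_kermxP/eqP => [YK | KY]; last by rewrite -[Y]trmxK -trmx_mul KY trmx0.
by rewrite -[kermx N]trmxK -trmx_mul YK trmx0.
Qed.

Lemma kermx_mul_delta_eq0P k :
  reflect (exists w : 'rV_n, w *m N = delta_mx 0 k)
          (kermx N *m (delta_mx k 0 : 'cV_n) == 0).
Proof.
rewrite -[delta_mx k 0]trmx_delta -sym_submxE.
by apply: (iffP submxP) => [[w ->] | [w <-]]; exists w.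
Qed.

End SymmetricKernel.

Section DeleteVertex.
Variables (F : fieldType) (n : nat) (v : 'I_n.+1).
(* D^T *m A *m D is A with row and column v deleted. *)
Local Notation D := (col' v (1%:M : 'M[F]_n.+1)).
Local Notation c := (delta_mx v 0 : 'cV[F]_n.+1).

Lemma mul_tr_col'1 : D^T *m D = 1%:M.
Proof.
apply/matrixP=> j k; rewrite mulmx_colsub mulmx1 !mxE eq_sym.
by rewrite (inj_eq (@lift_inj _ v)).
Qed.

Lemma col'1_mul_tr_add_delta : D *m D^T + c *m c^T = 1%:M.
Proof.
apply/matrixP=> i i'; rewrite !mxE big_ord1 !mxE.
case: (unliftP v i) => [j ->|->].
  rewrite (bigD1 j) //= big1 ?addr0 => [|k /negbTE jk]; last first.
    by rewrite !mxE (inj_eq (@lift_inj _ v)) eq_sym jk mul0r.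
  by rewrite !mxE eqxx [lift v j == v]eq_sym (negbTE (neq_lift v j)) mul1r mul0r addr0 eq_sym.
rewrite big1 ?add0r => [|k _]; last by rewrite !mxE (negbTE (neq_lift v k)) mul0r.
by rewrite eqxx !andbT mul1r eq_sym.
Qed.

Lemma mul_tr_col'1_delta : D^T *m c = 0.
Proof.
apply/matrixP=> j k; rewrite !mxE big1 // => i _; rewrite !mxE.
by case: eqP => [->|]; rewrite ?mul0r // eq_sym (negbTE (neq_lift v j)) mulr0.
Qed.

Lemma mulmx_col'1_split m (X : 'M[F]_(m, n.+1)) :
  X *m D *m D^T + X *m c *m c^T = X.
Proof. by rewrite -!mulmxA -mulmxDr col'1_mul_tr_add_delta mulmx1. Qed.

Lemma mulmx_col'1_trK m (X : 'M[F]_(m, n.+1)) : X *m c = 0 -> X *m D *m D^T = X.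
Proof. by move=> Xc; rewrite -[RHS]mulmx_col'1_split Xc mul0mx addr0. Qed.

Variable N : 'M[F]_n.+1.
Local Notation N' := (D^T *m N *m D).
Local Notation b := (D^T *m N *m c).

Lemma rank_kermx_cap_del :
  \rank (kermx N :&: kermx c)%MS = \rank (kermx N' :&: kermx b)%MS.
Proof.
set X := (kermx N :&: kermx c)%MS; set W := (kermx N' :&: kermx b)%MS.
have /sub_kermxP XN : (X <= kermx N)%MS := capmxSl _ _.
have /sub_kermxP Xc : (X <= kermx c)%MS := capmxSr _ _.
have /sub_kermxP WN' : (W <= kermx N')%MS := capmxSl _ _.
have /sub_kermxP Wb : (W <= kermx b)%MS := capmxSr _ _.
have XD_W : (X *m D <= W)%MS.
  rewrite sub_capmx; apply/andP; split; apply/sub_kermxP;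
    by rewrite !mulmxA mulmx_col'1_trK // XN !mul0mx.
have WDt_X : (W *m D^T <= X)%MS.
  rewrite sub_capmx; apply/andP; split; apply/sub_kermxP; last first.
    by rewrite -mulmxA mul_tr_col'1_delta mulmx0.
  rewrite -[LHS]mulmx_col'1_split.
  by rewrite !mulmxA in WN' Wb; rewrite WN' Wb !mul0mx addr0.
apply: anti_leq; apply/andP; split.
  apply: leq_trans (mxrankS XD_W).
  by rewrite -{1}(mulmx_col'1_trK Xc) mxrankM_maxl.
apply: leq_trans (mxrankS WDt_X).
by rewrite -{1}[W]mulmx1 -mul_tr_col'1 mulmxA mxrankM_maxl.
Qed.

Lemma rank_kermx_del :
  (\rank (kermx N') + \rank (kermx N *m c) =
   \rank (kermx N) + \rank (kermx N' *m b))%N.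
Proof.
rewrite -(mxrank_mul_ker (kermx N) c) -(mxrank_mul_ker (kermx N') b).
by rewrite rank_kermx_cap_del; lia.
Qed.

Lemma kermx_del_mul_neq0P :
  reflect (exists2 w : 'rV_n.+1, w *m N = delta_mx 0 v & w 0 v = 0)
          (kermx N' *m b != 0).
Proof.
apply: (iffP (kermx_mul_neq0P _ _)) => [[u uN' ub] | [w wN wv]].
  pose beta := (u *m b) 0 0.
  have ubE : u *m b = beta%:M := mx11_scalar _.
  have beta_neq0 : beta != 0.
    by apply: contraNneq ub => beta0; rewrite ubE beta0 raddf0.
  set x := u *m D^T.
  have xN : x *m N = beta *: delta_mx 0 v.
    have xND : x *m N *m D = 0 by rewrite -uN' !mulmxA.
    have xNc : x *m N *m c = beta%:M by rewrite -ubE !mulmxA.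
    by rewrite -[LHS]mulmx_col'1_split xND xNc mul0mx add0r mul_scalar_mx trmx_delta.
  exists (beta^-1 *: x); first by rewrite -scalemxAl xN scalerA mulVf ?scale1r.
  by rewrite mxE -rV_mul_delta_mx -mulmxA mul_tr_col'1_delta mulmx0 mxE mulr0.
have wc : w *m c = 0 by rewrite [LHS]mx11_scalar rV_mul_delta_mx wv raddf0.
exists (w *m D).
  rewrite !mulmxA mulmx_col'1_trK // wN -trmx_delta -[D]trmxK -trmx_mul.
  by rewrite mul_tr_col'1_delta trmx0.
rewrite !mulmxA mulmx_col'1_trK // wN mul_delta_mx.
by rewrite -mxrank_eq0 mxrank_delta.
Qed.

End DeleteVertex.

Lemma pchar_F2 : (2 \in [pchar 'F_2])%N.
Proof. exact: pchar_Fp. Qed.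

Lemma F2_mulxx (a : 'F_2) : a * a = a.
Proof. by case: a => [[|[|]]] //= ?; apply/val_inj. Qed.

Lemma F2_neq0 (a : 'F_2) : a != 0 -> a = 1.
Proof. by case: a => [[|[|]]] //= ? _; apply/val_inj. Qed.

Section SymmetricUnitDiagonalF2.
Variables (n : nat) (N : 'M['F_2]_n).
Hypotheses (N_sym : N^T = N) (N_diag : forall i, N i i = 1).

Lemma F2_quad_form (x : 'rV_n) : x *m N *m x^T = x *m const_mx 1.
Proof.
pose U : 'M_n := \matrix_(i, j) (if (i < j)%N then N i j else 0).
have -> : N = U + U^T + 1%:M.
  apply/matrixP=> i j; rewrite !mxE.
  case: (ltngtP i j) => [lt_ij | gt_ij | /val_inj <-]; last by rewrite eqxx !add0r N_diag.
    by rewrite addr0 (ltn_eqF lt_ij : (i == j) = false) addr0.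
  by rewrite add0r (gtn_eqF gt_ij : (i == j) = false) addr0 -[in LHS]N_sym mxE.
have UT : x *m U^T *m x^T = x *m U *m x^T.
  by rewrite [RHS]mx11_scalar -tr_scalar_mx -mx11_scalar !trmx_mul trmxK mulmxA.
have addxx (y : 'M['F_2]_1) : y + y = 0.
  by apply/matrixP=> i j; rewrite !mxE (addrr_pchar2 pchar_F2).
rewrite !mulmxDr !mulmxDl UT mulmx1 addxx add0r.
by apply/matrixP=> i j; rewrite !mxE; apply: eq_bigr => k _; rewrite !mxE !ord1 F2_mulxx mulr1.
Qed.

Lemma F2_kermx_mul_const1 : kermx N *m (const_mx 1 : 'cV_n) = 0.
Proof.
apply/row_matrixP=> i; rewrite row_mul row0.
have uN : row i (kermx N) *m N = 0 by apply/sub_kermxP/row_sub.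
by rewrite -F2_quad_form uN mul0mx.
Qed.

Lemma F2_sym_diag1_solvable : exists q : 'cV_n, N *m q = const_mx 1.
Proof.
have /submxP[w wN] : ((const_mx 1 : 'rV_n) <= N)%MS.
  by rewrite sym_submxE // trmx_const F2_kermx_mul_const1.
by exists w^T; rewrite -N_sym -trmx_mul -wN trmx_const.
Qed.

Lemma F2_solution_entry k (w : 'rV_n) (q : 'cV_n) :
  w *m N = delta_mx 0 k -> N *m q = const_mx 1 -> q k 0 = w 0 k.
Proof.
move=> wN Nq; have entry (y : 'cV_n) : ((delta_mx 0 k : 'rV_n) *m y) 0 0 = y k 0.
  by rewrite -rowE mxE.
by rewrite -entry -wN -mulmxA Nq -F2_quad_form wN entry mxE.
Qed.

End SymmetricUnitDiagonalF2.

Lemma F2_kermx_del_mul_neq0E n (N : 'M['F_2]_n.+1) v (w : 'rV_n.+1) :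
  N^T = N -> (forall i, N i i = 1) -> w *m N = delta_mx 0 v ->
  (kermx ((col' v 1%:M)^T *m N *m col' v 1%:M)
     *m ((col' v 1%:M)^T *m N *m (delta_mx v 0 : 'cV_n.+1)) != 0) = (w 0 v == 0).
Proof.
move=> N_sym N_diag wN; have [q0 Nq0] := F2_sym_diag1_solvable N_sym N_diag.
apply/kermx_del_mul_neq0P/eqP => [[w' w'N w'v] | wv]; last by exists w.
by rewrite -(F2_solution_entry N_sym N_diag wN Nq0) (F2_solution_entry N_sym N_diag w'N Nq0).
Qed.

Lemma closed_adj_tr n (e : rel 'I_n) : symmetric e -> (closed_adj e)^T = closed_adj e.
Proof. by move=> e_sym; apply/matrixP=> i j; rewrite !mxE eq_sym e_sym. Qed.

Lemma closed_adj_diag n (e : rel 'I_n) i : closed_adj e i i = 1.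
Proof. by rewrite mxE eqxx. Qed.

Lemma closed_adj_del_vertex n (e : rel 'I_n.+1) v :
  closed_adj (del_vertex e v) = (col' v 1%:M)^T *m closed_adj e *m col' v 1%:M.
Proof.
rewrite -mulmxA mulmx_colsub mulmx1 trmx_mxsub trmx1 mul_rowsub_mx mul1mx.
by apply/matrixP=> i j; rewrite !mxE (inj_eq (@lift_inj _ v)).
Qed.

Lemma half_activatedE n (e : rel 'I_n) v : symmetric e ->
  half_activated e v <-> kermx (closed_adj e) *m (delta_mx v 0 : 'cV_n) != 0.
Proof.
move=> /closed_adj_tr N_sym; rewrite -(rwP (kermx_mul_neq0P _ _)).
split=> [[l [Nl lv]] | [u uN uv]].
  exists l^T; first by rewrite -N_sym -trmx_mul Nl trmx0.
  by rewrite mx11_neq0 rV_mul_delta_mx mxE lv oner_neq0.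
exists u^T; split; first by rewrite /null_pattern -N_sym -trmx_mul uN trmx0.
by rewrite mxE; apply: F2_neq0; rewrite -rV_mul_delta_mx -mx11_neq0.
Qed.

Lemma null_diffE n (e : rel 'I_n.+1) v : symmetric e ->
  null_diff e v =
    (kermx ((col' v 1%:M)^T *m closed_adj e *m col' v 1%:M)
       *m ((col' v 1%:M)^T *m closed_adj e *m (delta_mx v 0 : 'cV_n.+1)) != 0)%:R
    - (kermx (closed_adj e) *m (delta_mx v 0 : 'cV_n.+1) != 0)%:R.
Proof.
move=> e_sym; have del_sym : symmetric (del_vertex e v) by move=> i j; apply: e_sym.
rewrite /null_diff /nullity !closed_adj_tr // closed_adj_del_vertex.
have := rank_kermx_del v (closed_adj e); rewrite !mxrank_cV.
by move: (\rank _) (\rank _) (_ != 0) (_ != 0) => a b [] [] /=; lia.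
Qed.

Unset Implicit Arguments.

Theorem proposition2p6 (n : nat) (e : rel 'I_n.+1) (v : 'I_n.+1) :
  simple_graph e ->
  (always_activated e v <-> null_diff e v = 0) /\
  (never_activated e v <-> null_diff e v = 1).
Proof.
case=> _ e_sym; have N_sym := closed_adj_tr e_sym; have N_diag := closed_adj_diag e.
have [q0 Nq0] := F2_sym_diag1_solvable N_sym N_diag.
rewrite /always_activated /never_activated half_activatedE // null_diffE //.
case: (kermx_mul_delta_eq0P N_sym v) => [[w wN] | no_pivot].
  have entry q := F2_solution_entry N_sym N_diag wN (q := q).
  rewrite (F2_kermx_del_mul_neq0E N_sym N_diag wN).
  have [wv | /F2_neq0 wv] := eqVneq (w 0 v) 0.
    split; split=> //.
    - by case=> _ /(_ q0 Nq0); rewrite entry // wv => /eqP; rewrite eq_sym oner_eq0.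
    - by split=> // p /entry; rewrite wv.
  split; split=> //.
  - by split=> // p /entry; rewrite wv.
  - by case=> _ /(_ q0 Nq0); rewrite entry // wv => /eqP; rewrite oner_eq0.
case: kermx_del_mul_neq0P => [[w wN _] | _]; first by case: no_pivot; exists w.
by split; split=> [[]|].
Qed.
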